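(* There exists an absolute constant $L$ such that for all $\omega=(\alpha^+,\alpha^-,\gamma_1,\delta)$ and $\tilde\omega=(\tilde\alpha^+,\tilde\alpha^-,\tilde\gamma_1,\tilde\delta)$ in $\hat\Omega$ and all $z\in\mathbb{C}$, $$\left|\mathsf{E}_\omega(z)-\mathsf{E}_{\tilde\omega}(z)\right|\le e^{|\gamma_1||z|+5\delta|z|^2}\left(e^{|\gamma_1-\tilde\gamma_1||z|+\frac{|\delta-\tilde\delta|}{2}|z|^2}-1\right)+|z|\left(\sum_{i\ge1}\left[|\alpha_i^+-\tilde\alpha_i^+|^3+|\alpha_i^--\tilde\alpha_i^-|^3\right]\right)^{1/3}e^{|\tilde\gamma_1||z|+\frac{\tilde\delta}{2}|z|^2+L\left(|z|(\delta^{1/2}+\tilde\delta^{1/2})+1\right)^3}.$$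
   Context: $\hat\Omega$ is the set of $(\alpha^+,\alpha^-,\gamma_1,\delta)$ with $\alpha^\pm=(\alpha_1^\pm\ge\alpha_2^\pm\ge\dots\ge0)$ non-increasing sequences of non-negative reals, $\gamma_1\in\mathbb{R}$, $\delta\ge0$, and $\sum_i(\alpha_i^+)^2+\sum_i(\alpha_i^-)^2\le\delta$. For such a point set $\gamma_2=\delta-\sum_i(\alpha_i^+)^2-\sum_i(\alpha_i^-)^2$ and $$\mathsf{E}_\omega(z)=e^{-\gamma_1 z-\frac{\gamma_2}{2}z^2}\prod_{i\ge1}e^{z\alpha_i^+}(1-z\alpha_i^+)\prod_{i\ge1}e^{-z\alpha_i^-}(1+z\alpha_i^-).$$ *)

From Stdlib Require Import Reals.
From Coquelicot Require Import Coquelicot.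
Open Scope R_scope.

Definition Cexp (z : C) : C :=
  (exp (Re z) * cos (Im z), exp (Re z) * sin (Im z)).

(* Limit of a complex sequence, taken componentwise (total: meaningful
   when the sequence converges). *)
Definition Clim_seq (u : nat -> C) : C :=
  (real (Lim_seq (fun n => Re (u n))), real (Lim_seq (fun n => Im (u n)))).

(* A point omega = (alpha^+, alpha^-, gamma_1, delta); the sequences are
   indexed from 0, i.e. [ap i] stands for alpha^+_{i+1}. *)
Record omega := mkOmega {
  ap : nat -> R;
  am : nat -> R;
  g1 : R;
  dl : R
}.

Definition nonincr_nonneg (a : nat -> R) : Prop :=
  (forall i, 0 <= a i) /\ (forall i, a (S i) <= a i).

(* Membership in Omega-hat: sum_i (alpha^+_i)^2 + sum_i (alpha^-_i)^2 <= delta,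
   stated for all partial sums (the terms are nonnegative). *)
Definition in_Omega_hat (w : omega) : Prop :=
  nonincr_nonneg (ap w) /\ nonincr_nonneg (am w) /\ 0 <= dl w /\
  forall N, sum_n (fun i => (ap w i) ^ 2 + (am w i) ^ 2) N <= dl w.

Definition g2 (w : omega) : R :=
  dl w - Series (fun i => (ap w i) ^ 2) - Series (fun i => (am w i) ^ 2).

Definition Efactor (a b : R) (z : C) : C :=
  Cmult (Cmult (Cexp (Cmult z (RtoC a))) (Cminus (RtoC 1) (Cmult z (RtoC a))))
        (Cmult (Cexp (Copp (Cmult z (RtoC b)))) (Cplus (RtoC 1) (Cmult z (RtoC b)))).

Fixpoint Eprod (w : omega) (z : C) (N : nat) : C :=
  match N with
  | O => RtoC 1
  | S n => Cmult (Eprod w z n) (Efactor (ap w n) (am w n) z)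
  end.

Definition E (w : omega) (z : C) : C :=
  Cmult (Cexp (Cminus (Copp (Cmult (RtoC (g1 w)) z))
                      (Cmult (RtoC (g2 w / 2)) (Cmult z z))))
        (Clim_seq (Eprod w z)).

Definition cbrt (x : R) : R := if Rle_dec x 0 then 0 else Rpower x (1 / 3).

(* With E2(u) = (1 - u) e^{u + u^2/2} the Weierstrass primary factor of genus 2,
   e^{u}(1 - u) = e^{-u^2/2} E2(u), and the Gaussian parts of all factors combine with
   gamma_2 into e^{-delta z^2/2}:
     E_omega(z) = e^{-gamma_1 z - delta z^2/2} prod_i E2(alpha_i^+ z) E2(-alpha_i^- z).
   Since |E2(u)| <= e^{|u|^2}, the product is bounded by e^{delta |z|^2}; since
   E2'(u) = -u^2 e^{u + u^2/2}, replacing alpha_i by alpha'_i changes a factor by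
   O(|z|^3 (alpha_i^2 + alpha_i'^2) |alpha_i - alpha_i'|).  Each |alpha_i - alpha_i'| is at
   most the cube root of the cubic sum and sum_i alpha_i^2 <= delta, which gives the second
   term; the first comes from |e^w - 1| <= e^{|w|} - 1 applied to the Gaussian prefactors.
   All estimates are proved for partial products and pass to the limit. *)

From Stdlib Require Import Reals Lra Psatz.
From Coquelicot Require Import Coquelicot.
Open Scope R_scope.

Lemma exp_le_exp x y : x <= y -> exp x <= exp y.
Proof. intros [H | ->]; [now apply Rlt_le, exp_increasing | apply Rle_refl]. Qed.

Lemma Re_le_Cmod (c : C) : Re c <= Cmod c.
Proof. eapply Rle_trans; [apply Rle_abs | apply re_le_Cmod]. Qed.

Lemma im_le_Cmod (c : C) : Rabs (Im c) <= Cmod c.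
Proof.
  destruct c as [x y]; unfold Cmod, Im; simpl.
  rewrite <- sqrt_Rsqr_abs. apply sqrt_le_1_alt. unfold Rsqr. nra.
Qed.

Lemma Cmod_RtoC_mul (z : C) (a : R) : Cmod (z * RtoC a) = Cmod z * Rabs a.
Proof. now rewrite Cmod_mult, Cmod_R. Qed.

Lemma Cexp_add (a b : C) : Cexp (a + b) = (Cexp a * Cexp b)%C.
Proof.
  destruct a as [a1 a2], b as [b1 b2]; unfold Cexp, Cplus, Cmult; simpl.
  rewrite exp_plus, cos_plus, sin_plus. apply injective_projections; simpl; ring.
Qed.

Lemma Cexp_0 : Cexp 0 = 1%C.
Proof.
  unfold Cexp; simpl. rewrite exp_0, cos_0, sin_0.
  apply injective_projections; simpl; ring.
Qed.

Lemma Cmod_Cexp (a : C) : Cmod (Cexp a) = exp (Re a).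
Proof.
  destruct a as [x y]; unfold Cmod, Cexp, Re, Im; simpl.
  replace (exp x * cos y * (exp x * cos y * 1) + exp x * sin y * (exp x * sin y * 1))
    with (exp x ^ 2 * (sin y ^ 2 + cos y ^ 2)) by ring.
  rewrite <- !Rsqr_pow2, sin2_cos2, Rmult_1_r, Rsqr_pow2.
  apply sqrt_pow2, Rlt_le, exp_pos.
Qed.

(** * Mean value inequality for curves in C *)

Lemma nonincreasing_of_derive_nonpos (h h' : R -> R) a b :
  a <= b -> (forall t, is_derive h t (h' t)) ->
  (forall t, a <= t <= b -> h' t <= 0) -> h b <= h a.
Proof.
  intros Hab Hd Hn.
  destruct (MVT_gen h a b h') as [c [Hc Hmvt]].
  - now intros.
  - intros x _. apply continuity_pt_filterlim, (ex_derive_continuous h). now exists (h' x).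
  - rewrite Rmin_left, Rmax_right in Hc by lra.
    assert (h' c <= 0) by (apply Hn; lra). nra.
Qed.

Definition is_Cderive (f : R -> C) (t : R) (l : C) : Prop :=
  is_derive (fun s => Re (f s)) t (Re l) /\ is_derive (fun s => Im (f s)) t (Im l).

Lemma is_Cderive_ext f g t l l' :
  is_Cderive f t l -> (forall s, f s = g s) -> l = l' -> is_Cderive g t l'.
Proof.
  intros [H1 H2] Efg <-; split.
  - apply is_derive_ext with (f := fun s => Re (f s)); auto. intro; now rewrite Efg.
  - apply is_derive_ext with (f := fun s => Im (f s)); auto. intro; now rewrite Efg.
Qed.

Lemma is_Cderive_const (c : C) t : is_Cderive (fun _ => c) t 0%C.
Proof. split; simpl; auto_derive; auto. Qed.

Lemma is_Cderive_scal_id (c : C) t : is_Cderive (fun s => c * RtoC s)%C t c.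
Proof. unfold is_Cderive, Re, Im; split; simpl; auto_derive; auto; ring. Qed.

Lemma is_Cderive_plus f g t lf lg :
  is_Cderive f t lf -> is_Cderive g t lg -> is_Cderive (fun s => f s + g s)%C t (lf + lg)%C.
Proof. intros [H1 H2] [H3 H4]; split; now apply @is_derive_plus. Qed.

Lemma is_Cderive_opp f t l : is_Cderive f t l -> is_Cderive (fun s => - f s)%C t (- l)%C.
Proof. intros [H1 H2]; split; now apply @is_derive_opp. Qed.

Lemma is_Cderive_mult f g t lf lg :
  is_Cderive f t lf -> is_Cderive g t lg ->
  is_Cderive (fun s => f s * g s)%C t (lf * g t + f t * lg)%C.
Proof.
  intros [H1 H2] [H3 H4].
  assert (Hm : forall (u v : R -> R) lu lv, is_derive u t lu -> is_derive v t lv ->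
             is_derive (fun s => u s * v s) t (lu * v t + u t * lv)).
  { intros u v lu lv Hu Hv. apply (is_derive_mult u v); auto. intros; apply Rmult_comm. }
  split.
  - eapply is_derive_ext.
    { intro s. symmetry. change (Re (f s * g s)%C) with
        (Re (f s) * Re (g s) - Im (f s) * Im (g s)). reflexivity. }
    replace (Re (lf * g t + f t * lg)%C) with
      ((Re lf * Re (g t) + Re (f t) * Re lg) - (Im lf * Im (g t) + Im (f t) * Im lg))
      by (unfold Re, Im; simpl; ring).
    apply (is_derive_minus (fun s => Re (f s) * Re (g s))); auto.
  - eapply is_derive_ext.
    { intro s. symmetry. change (Im (f s * g s)%C) with
        (Re (f s) * Im (g s) + Im (f s) * Re (g s)). reflexivity. }
    replace (Im (lf * g t + f t * lg)%C) with
      ((Re lf * Im (g t) + Re (f t) * Im lg) + (Im lf * Re (g t) + Im (f t) * Re lg))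
      by (unfold Re, Im; simpl; ring).
    apply (is_derive_plus (fun s => Re (f s) * Im (g s))); auto.
Qed.

Lemma is_Cderive_Cexp f t l :
  is_Cderive f t l -> is_Cderive (fun s => Cexp (f s)) t (Cexp (f t) * l)%C.
Proof.
  intros [H1 H2].
  assert (Hexp : is_derive (fun s => exp (Re (f s))) t (Re l * exp (Re (f t)))).
  { apply (is_derive_comp exp); auto. apply is_derive_Reals, derivable_pt_lim_exp. }
  split.
  - apply is_derive_ext with (f := fun s => exp (Re (f s)) * cos (Im (f s))); [reflexivity |].
    replace (Re (Cexp (f t) * l)%C) with
      (Re l * exp (Re (f t)) * cos (Im (f t)) + exp (Re (f t)) * (Im l * - sin (Im (f t))))
      by (unfold Cexp, Re, Im; simpl; ring).
    apply (is_derive_mult (fun s => exp (Re (f s))) (fun s => cos (Im (f s)))); auto.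
    + apply (is_derive_comp cos); auto. apply is_derive_Reals, derivable_pt_lim_cos.
    + intros; apply Rmult_comm.
  - apply is_derive_ext with (f := fun s => exp (Re (f s)) * sin (Im (f s))); [reflexivity |].
    replace (Im (Cexp (f t) * l)%C) with
      (Re l * exp (Re (f t)) * sin (Im (f t)) + exp (Re (f t)) * (Im l * cos (Im (f t))))
      by (unfold Cexp, Re, Im; simpl; ring).
    apply (is_derive_mult (fun s => exp (Re (f s))) (fun s => sin (Im (f s)))); auto.
    + apply (is_derive_comp sin); auto. apply is_derive_Reals, derivable_pt_lim_sin.
    + intros; apply Rmult_comm.
Qed.

(* Project onto the direction d = f s1 - f s0: the real function
   Re (conj d * f) - |d| g has a nonpositive derivative on [s0, s1]. *)
Lemma Cmod_sub_le_of_derive (f f' : R -> C) (g g' : R -> R) s0 s1 :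
  s0 <= s1 ->
  (forall t, is_Cderive f t (f' t)) -> (forall t, is_derive g t (g' t)) ->
  (forall t, s0 <= t <= s1 -> Cmod (f' t) <= g' t) ->
  Cmod (f s1 - f s0) <= g s1 - g s0.
Proof.
  intros Hs Hf Hg Hb.
  set (d := (f s1 - f s0)%C).
  assert (Hd : 0 <= Cmod d) by apply Cmod_ge_0.
  assert (Hg_incr : g s0 <= g s1).
  { apply Ropp_le_cancel.
    apply (nonincreasing_of_derive_nonpos (fun t => - g t) (fun t => - g' t)); auto.
    - intro t. now apply @is_derive_opp.
    - intros t Ht. generalize (Hb t Ht) (Cmod_ge_0 (f' t)). lra. }
  set (h := fun t => Re d * Re (f t) + Im d * Im (f t) - Cmod d * g t).
  assert (Hh : h s1 <= h s0).
  { apply (nonincreasing_of_derive_nonpos h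
             (fun t => Re d * Re (f' t) + Im d * Im (f' t) - Cmod d * g' t)); auto.
    - intro t. destruct (Hf t) as [H1 H2]. unfold h.
      apply @is_derive_minus; [apply @is_derive_plus |]; now apply @is_derive_scal.
    - intros t Ht.
      assert (Hre : Re d * Re (f' t) + Im d * Im (f' t) <= Cmod d * Cmod (f' t)).
      { rewrite <- Cmod_conj, <- Cmod_mult.
        eapply Rle_trans; [| apply Re_le_Cmod]. destruct d, (f' t); simpl; lra. }
      generalize (Hb t Ht). nra. }
  assert (Hsq : Cmod d ^ 2 <= Cmod d * (g s1 - g s0)).
  { unfold h in Hh. rewrite Cmod2_alt. unfold d in Hh |- *. unfold Re, Im in *; simpl in *. nra. }
  destruct (Req_dec (Cmod d) 0) as [->|Hd0]; [lra | nra].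
Qed.

Lemma Cmod_Cexp_sub_1_le (w : C) : Cmod (Cexp w - 1) <= exp (Cmod w) - 1.
Proof.
  assert (H := Cmod_sub_le_of_derive (fun t => Cexp (w * RtoC t)) (fun t => Cexp (w * RtoC t) * w)%C
                 (fun t => exp (t * Cmod w)) (fun t => Cmod w * exp (t * Cmod w)) 0 1).
  cbv beta in H. rewrite Rmult_1_l, Rmult_0_l, exp_0 in H.
  replace (w * RtoC 1)%C with w in H by ring.
  replace (w * RtoC 0)%C with (RtoC 0) in H by ring. rewrite Cexp_0 in H.
  apply H.
  - lra.
  - intro t. apply is_Cderive_Cexp, is_Cderive_scal_id.
  - intro t. auto_derive; auto; ring.
  - intros t Ht. rewrite Cmod_mult, Cmod_Cexp, Rmult_comm.
    apply Rmult_le_compat_l; [apply Cmod_ge_0 |]. apply exp_le_exp.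
    eapply Rle_trans; [apply Re_le_Cmod |]. rewrite Cmod_RtoC_mul, Rabs_right by lra.
    generalize (Cmod_ge_0 w); nra.
Qed.

(** * The primary factor E2 *)

Definition weierstrass2 (u : C) : C := (Cexp (u + RtoC (1 / 2) * (u * u)) * (1 - u))%C.

Lemma weierstrass2_0 : weierstrass2 0 = 1%C.
Proof.
  unfold weierstrass2. replace (RtoC 0 + RtoC (1 / 2) * (RtoC 0 * RtoC 0))%C with (RtoC 0) by ring.
  rewrite Cexp_0. ring.
Qed.

Lemma sqrt_le_exp_half_pred q : 0 <= q -> sqrt q <= exp ((q - 1) / 2).
Proof.
  intro Hq. rewrite <- (sqrt_pow2 (exp ((q - 1) / 2))) by apply Rlt_le, exp_pos.
  apply sqrt_le_1_alt.
  replace (exp ((q - 1) / 2) ^ 2) with (exp (q - 1)).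
  - generalize (exp_ineq1_le (q - 1)). lra.
  - simpl. rewrite Rmult_1_r, <- exp_plus. f_equal. field.
Qed.

(* |1 - u| <= exp ((|1 - u|^2 - 1) / 2), and Re (u + u^2/2) + (|1 - u|^2 - 1) / 2 = (Re u)^2. *)
Lemma Cmod_weierstrass2_le u : Cmod (weierstrass2 u) <= exp (Cmod u ^ 2).
Proof.
  unfold weierstrass2. rewrite Cmod_mult, Cmod_Cexp, Cmod2_alt.
  destruct u as [x y].
  replace (Cmod (1 - (x, y))%C) with (sqrt ((1 - x) ^ 2 + y ^ 2))
    by (unfold Cmod; f_equal; simpl; ring).
  replace (Re ((x, y) + RtoC (1 / 2) * ((x, y) * (x, y)))%C) with (x + (x ^ 2 - y ^ 2) / 2)
    by (unfold Re; simpl; field).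
  eapply Rle_trans.
  { apply Rmult_le_compat_l; [apply Rlt_le, exp_pos |].
    apply sqrt_le_exp_half_pred, Rplus_le_le_0_compat; apply pow2_ge_0. }
  rewrite <- exp_plus. apply exp_le_exp. unfold Re, Im; simpl. nra.
Qed.

Lemma is_Cderive_weierstrass2_ray (z : C) t :
  is_Cderive (fun s => weierstrass2 (z * RtoC s)) t
    (- (z * z * z) * RtoC (t * t) * Cexp (z * RtoC t + RtoC (1 / 2) * ((z * RtoC t) * (z * RtoC t))))%C.
Proof.
  eapply is_Cderive_ext; [apply is_Cderive_mult | reflexivity |].
  - apply is_Cderive_Cexp, is_Cderive_plus; [apply is_Cderive_scal_id |].
    apply is_Cderive_mult; [apply is_Cderive_const |].
    apply is_Cderive_mult; apply is_Cderive_scal_id.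
  - apply is_Cderive_plus; [apply is_Cderive_const |].
    apply is_Cderive_opp, is_Cderive_scal_id.
  - assert (Hh : RtoC (1 / 2) = (/ RtoC 2)%C)
      by (apply injective_projections; unfold Cinv; simpl; field).
    cbv beta. rewrite Hh, RtoC_mult. field.
Qed.

Definition weierstrass2_lipschitz (z : C) (m : R) : R :=
  Cmod z ^ 3 * exp (Cmod z * m + Cmod z ^ 2 * m ^ 2 / 2).

Lemma weierstrass2_lipschitz_opp z m : weierstrass2_lipschitz (- z) m = weierstrass2_lipschitz z m.
Proof. unfold weierstrass2_lipschitz. now rewrite Cmod_opp. Qed.

Lemma weierstrass2_lipschitz_ge0 z m : 0 <= weierstrass2_lipschitz z m.
Proof.
  apply Rmult_le_pos; [apply pow_le, Cmod_ge_0 | apply Rlt_le, exp_pos].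
Qed.

Lemma Re_ray_exponent_le (z : C) t m : 0 <= t <= m ->
  Re (z * RtoC t + RtoC (1 / 2) * ((z * RtoC t) * (z * RtoC t)))%C
    <= Cmod z * m + Cmod z ^ 2 * m ^ 2 / 2.
Proof.
  intro Ht. assert (Hr := Cmod_ge_0 z).
  eapply Rle_trans; [apply Re_le_Cmod |].
  eapply Rle_trans; [apply Cmod_triangle |].
  rewrite !Cmod_mult, !Cmod_R, !Rabs_right by lra.
  assert (Cmod z * t <= Cmod z * m) by (apply Rmult_le_compat_l; lra).
  assert (0 <= Cmod z * t) by nra. nra.
Qed.

Lemma Cmod_weierstrass2_ray_sub_le_ord z a a' m : 0 <= a' -> a' <= a -> a <= m ->
  Cmod (weierstrass2 (z * RtoC a) - weierstrass2 (z * RtoC a')) <=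
  weierstrass2_lipschitz z m * (a ^ 2 + a' ^ 2) * (a - a').
Proof.
  intros H0 H1 H2.
  set (M := weierstrass2_lipschitz z m * (a ^ 2 + a' ^ 2)).
  replace (M * (a - a')) with (M * a - M * a') by ring.
  eapply (Cmod_sub_le_of_derive (fun s => weierstrass2 (z * RtoC s)) _
            (fun s => M * s) (fun _ => M) a' a H1).
  - intro t. apply is_Cderive_weierstrass2_ray.
  - intro t. auto_derive; auto; ring.
  - intros t Ht. unfold M, weierstrass2_lipschitz.
    rewrite !Cmod_mult, Cmod_Cexp, Cmod_opp, !Cmod_mult, Cmod_R, Rabs_right by nra.
    replace (Cmod z * Cmod z * Cmod z) with (Cmod z ^ 3) by ring.
    assert (0 <= Cmod z ^ 3) by apply pow_le, Cmod_ge_0.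
    assert (exp (Re (z * RtoC t + RtoC (1 / 2) * ((z * RtoC t) * (z * RtoC t)))%C)
              <= exp (Cmod z * m + Cmod z ^ 2 * m ^ 2 / 2))
      by (apply exp_le_exp, Re_ray_exponent_le; lra).
    assert (0 <= t * t <= a ^ 2 + a' ^ 2) by nra.
    assert (0 < exp (Re (z * RtoC t + RtoC (1 / 2) * ((z * RtoC t) * (z * RtoC t)))%C))
      by apply exp_pos.
    replace (Cmod z ^ 3 * exp (Cmod z * m + Cmod z ^ 2 * m ^ 2 / 2) * (a ^ 2 + a' ^ 2))
      with (Cmod z ^ 3 * (a ^ 2 + a' ^ 2) * exp (Cmod z * m + Cmod z ^ 2 * m ^ 2 / 2)) by ring.
    apply Rmult_le_compat; try nra.
Qed.

Lemma Cmod_weierstrass2_ray_sub_le z a a' m :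
  0 <= a <= m -> 0 <= a' <= m ->
  Cmod (weierstrass2 (z * RtoC a) - weierstrass2 (z * RtoC a')) <=
  weierstrass2_lipschitz z m * ((a ^ 2 + a' ^ 2) * Rabs (a - a')).
Proof.
  intros Ha Ha'. rewrite <- Rmult_assoc. destruct (Rle_dec a' a).
  - rewrite Rabs_right by lra. apply Cmod_weierstrass2_ray_sub_le_ord; lra.
  - rewrite <- Cmod_opp, Rabs_left, Rplus_comm by lra.
    replace (- (a - a')) with (a' - a) by ring.
    replace (- (weierstrass2 (z * RtoC a) - weierstrass2 (z * RtoC a')))%C
      with (weierstrass2 (z * RtoC a') - weierstrass2 (z * RtoC a))%C by ring.
    apply Cmod_weierstrass2_ray_sub_le_ord; lra.
Qed.

Fixpoint psum (f : nat -> R) (N : nat) : R :=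
  match N with O => 0 | S n => psum f n + f n end.

Fixpoint cprod (u : nat -> C) (N : nat) : C :=
  match N with O => 1%C | S n => (cprod u n * u n)%C end.

Lemma psum_nonneg f N : (forall i, 0 <= f i) -> 0 <= psum f N.
Proof. intro H; induction N; simpl; [lra |]. generalize (H N); lra. Qed.

Lemma psum_le f g N : (forall i, f i <= g i) -> psum f N <= psum g N.
Proof. intro H; induction N; simpl; [lra |]. generalize (H N); lra. Qed.

Lemma psum_plus f g N : psum (fun i => f i + g i) N = psum f N + psum g N.
Proof. induction N; simpl; [ring |]. rewrite IHN; ring. Qed.

Lemma psum_scal c f N : psum (fun i => c * f i) N = c * psum f N.
Proof. induction N; simpl; [ring |]. rewrite IHN; ring. Qed.

Lemma psum_S_sum_n f N : psum f (S N) = sum_n f N.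
Proof.
  induction N.
  - simpl. rewrite sum_O. ring.
  - rewrite sum_Sn, <- IHN. reflexivity.
Qed.

Lemma Cmod_cprod_le u s N : (forall i, Cmod (u i) <= exp (s i)) ->
  Cmod (cprod u N) <= exp (psum s N).
Proof.
  intro H; induction N; simpl.
  - rewrite Cmod_1, exp_0; lra.
  - rewrite Cmod_mult, exp_plus. apply Rmult_le_compat; auto using Cmod_ge_0.
Qed.

Lemma Cmod_cprod_sub_le u v s s' N :
  (forall i, 0 <= s i) -> (forall i, 0 <= s' i) ->
  (forall i, Cmod (u i) <= exp (s i)) -> (forall i, Cmod (v i) <= exp (s' i)) ->
  Cmod (cprod u N - cprod v N) <=
  exp (psum s N + psum s' N) * psum (fun i => Cmod (u i - v i)) N.
Proof.
  intros Hs Hs' Hu Hv; induction N; simpl.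
  - replace (RtoC 1 - RtoC 1)%C with (RtoC 0) by ring. rewrite Cmod_0. lra.
  - replace (cprod u N * u N - cprod v N * v N)%C with
      ((cprod u N - cprod v N) * u N + cprod v N * (u N - v N))%C by ring.
    eapply Rle_trans; [apply Cmod_triangle |]. rewrite !Cmod_mult.
    set (X := exp (psum s N + s N + (psum s' N + s' N))).
    assert (HS := psum_nonneg s N Hs). assert (HS' := psum_nonneg s' N Hs').
    assert (Hsn := Hs N). assert (Hsn' := Hs' N).
    assert (H1 : Cmod (cprod u N - cprod v N) * Cmod (u N)
                 <= X * psum (fun i => Cmod (u i - v i)) N).
    { eapply Rle_trans.
      { apply Rmult_le_compat; [apply Cmod_ge_0 .. | exact IHN | apply Hu]. }
      rewrite Rmult_assoc, (Rmult_comm _ (exp (s N))), <- Rmult_assoc, <- exp_plus.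
      apply Rmult_le_compat_r; [apply psum_nonneg; intro; apply Cmod_ge_0 |].
      apply exp_le_exp; lra. }
    assert (H2 : Cmod (cprod v N) * Cmod (u N - v N) <= X * Cmod (u N - v N)).
    { apply Rmult_le_compat_r; [apply Cmod_ge_0 |].
      eapply Rle_trans; [apply (Cmod_cprod_le v s'); auto |]. apply exp_le_exp; lra. }
    rewrite Rmult_plus_distr_l. lra.
Qed.

Definition is_Clim (u : nat -> C) (l : C) : Prop :=
  is_lim_seq (fun n => Re (u n)) (Re l) /\ is_lim_seq (fun n => Im (u n)) (Im l).

Lemma Clim_seq_correct u l : is_Clim u l -> Clim_seq u = l.
Proof.
  intros [H1 H2]. unfold Clim_seq.
  rewrite (is_lim_seq_unique _ _ H1), (is_lim_seq_unique _ _ H2). now destruct l.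
Qed.

Lemma is_Clim_ext u v l : (forall n, u n = v n) -> is_Clim u l -> is_Clim v l.
Proof.
  intros E [H1 H2]; split.
  - apply is_lim_seq_ext with (u := fun n => Re (u n)); auto. intro; now rewrite E.
  - apply is_lim_seq_ext with (u := fun n => Im (u n)); auto. intro; now rewrite E.
Qed.

Lemma is_Clim_const c : is_Clim (fun _ => c) c.
Proof. split; apply is_lim_seq_const. Qed.

Lemma is_Clim_mult u v l1 l2 : is_Clim u l1 -> is_Clim v l2 ->
  is_Clim (fun n => u n * v n)%C (l1 * l2)%C.
Proof.
  intros [H1 H2] [H3 H4]; split; simpl.
  - apply is_lim_seq_minus'; now apply is_lim_seq_mult'.
  - apply is_lim_seq_plus'; now apply is_lim_seq_mult'.
Qed.

Lemma is_Clim_minus u v l1 l2 : is_Clim u l1 -> is_Clim v l2 ->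
  is_Clim (fun n => u n - v n)%C (l1 - l2)%C.
Proof.
  intros [H1 H2] [H3 H4]; split; apply is_lim_seq_plus'; auto.
  - exact (proj1 (is_lim_seq_opp (fun n => Re (v n)) (Re l2)) H3).
  - exact (proj1 (is_lim_seq_opp (fun n => Im (v n)) (Im l2)) H4).
Qed.

Lemma is_Clim_RtoC_mult (x : nat -> R) (l : R) c :
  is_lim_seq x l -> is_Clim (fun n => RtoC (x n) * c)%C (RtoC l * c)%C.
Proof. intro H. apply is_Clim_mult; [split; simpl; auto; apply is_lim_seq_const | apply is_Clim_const]. Qed.

Lemma is_Clim_Cexp u l : is_Clim u l -> is_Clim (fun n => Cexp (u n)) (Cexp l).
Proof.
  intros [H1 H2].
  assert (Hcont : forall f : R -> R, (forall x, ex_derive f x) -> forall v (m : R),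
             is_lim_seq v m -> is_lim_seq (fun n => f (v n)) (f m)).
  { intros f Hf v m Hv. apply is_lim_seq_continuous; auto.
    apply continuity_pt_filterlim, (ex_derive_continuous f), Hf. }
  assert (Hexp := Hcont exp ltac:(intro; auto_derive; auto) _ _ H1).
  split; unfold Cexp; simpl; apply is_lim_seq_mult'; auto;
    apply Hcont; auto; intro; auto_derive; auto.
Qed.

Lemma is_Clim_Cmod_le u l B : is_Clim u l -> (forall n, Cmod (u n) <= B) -> Cmod l <= B.
Proof.
  intros [H1 H2] HB.
  assert (H : is_lim_seq (fun n => Cmod (u n)) (Cmod l)).
  { apply (is_lim_seq_continuous (fun p => sqrt p) (fun n => Re (u n) ^ 2 + Im (u n) ^ 2)).
    - apply continuity_pt_sqrt. apply Rplus_le_le_0_compat; apply pow2_ge_0.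
    - apply is_lim_seq_plus'; simpl; repeat apply is_lim_seq_mult'; auto using is_lim_seq_const. }
  change (Rbar_le (Cmod l) B). apply (is_lim_seq_le _ _ _ _ HB H (is_lim_seq_const B)).
Qed.

Lemma ex_lim_seq_of_summable_increments (u c : nat -> R) :
  (forall n, Rabs (u (S n) - u n) <= c n) -> ex_series c -> exists l : R, is_lim_seq u l.
Proof.
  intros H Hc.
  destruct (@ex_series_le R_AbsRing R_CompleteNormedModule (fun n => u (S n) - u n) c H Hc)
    as [L HL].
  exists (L + u O). apply is_lim_seq_incr_1.
  apply is_lim_seq_ext with (u := fun n => sum_n (fun n => u (S n) - u n) n + u O).
  - intro n. rewrite <- psum_S_sum_n.
    assert (Htel : forall N, psum (fun n => u (S n) - u n) N = u N - u O)
      by (induction N; simpl; [ring | rewrite IHN; ring]).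
    rewrite Htel. ring.
  - apply is_lim_seq_plus'; [exact HL | apply is_lim_seq_const].
Qed.

Lemma is_Clim_of_summable_increments (u : nat -> C) c :
  (forall n, Cmod (u (S n) - u n) <= c n) -> ex_series c -> exists l, is_Clim u l.
Proof.
  intros H Hc.
  destruct (ex_lim_seq_of_summable_increments (fun n => Re (u n)) c) as [l1 H1]; auto.
  { intro n. eapply Rle_trans; [| apply H]. eapply Rle_trans; [| apply re_le_Cmod].
    right; f_equal; unfold Re; simpl; ring. }
  destruct (ex_lim_seq_of_summable_increments (fun n => Im (u n)) c) as [l2 H2]; auto.
  { intro n. eapply Rle_trans; [| apply H]. eapply Rle_trans; [| apply im_le_Cmod].
    right; f_equal; unfold Im; simpl; ring. }
  now exists (l1, l2).
Qed.

(** * Points of Omega-hat and the factorization of E *)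

Definition alpha_sq (w : omega) (i : nat) : R := ap w i ^ 2 + am w i ^ 2.

Lemma alpha_sq_nonneg w i : 0 <= alpha_sq w i.
Proof. apply Rplus_le_le_0_compat; apply pow2_ge_0. Qed.

Lemma psum_alpha_sq_le w N : in_Omega_hat w -> psum (alpha_sq w) N <= dl w.
Proof.
  intros (_ & _ & Hd & Hsum). destruct N as [| N]; [exact Hd |].
  rewrite psum_S_sum_n. apply Hsum.
Qed.

Lemma ex_series_of_psum_bounded f M :
  (forall i, 0 <= f i) -> (forall N, psum f N <= M) -> ex_series f.
Proof.
  intros Hf HM.
  destruct (ex_finite_lim_seq_incr (sum_n f) M) as [l Hl].
  - intro n. rewrite <- !psum_S_sum_n. simpl. generalize (Hf (S n)). lra.
  - intro n. rewrite <- psum_S_sum_n. apply HM.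
  - now exists l.
Qed.

Lemma is_lim_seq_psum f : ex_series f -> is_lim_seq (psum f) (Series f).
Proof.
  intro H. apply is_lim_seq_incr_1.
  apply is_lim_seq_ext with (u := sum_n f); [intro; now rewrite psum_S_sum_n |].
  apply (Series_correct f H).
Qed.

Lemma term_le_Series f i : (forall i, 0 <= f i) -> ex_series f -> f i <= Series f.
Proof.
  intros Hf Hex.
  assert (Hincr : forall n, psum f n <= psum f (S n)) by (intro n; simpl; generalize (Hf n); lra).
  assert (H := is_lim_seq_incr_compare _ _ (is_lim_seq_psum f Hex) Hincr (S i)).
  simpl in H. generalize (psum_nonneg f i Hf). lra.
Qed.

Lemma omega_alpha_sq_series w : in_Omega_hat w ->
  ex_series (alpha_sq w) /\
  Series (alpha_sq w) = Series (fun i => ap w i ^ 2) + Series (fun i => am w i ^ 2).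
Proof.
  intro Hw.
  assert (Hex : forall f : nat -> R, (forall i, 0 <= f i <= alpha_sq w i) -> ex_series f).
  { intros f Hf. apply ex_series_of_psum_bounded with (dl w); [apply Hf |].
    intro N. eapply Rle_trans; [| apply (psum_alpha_sq_le w N Hw)].
    apply psum_le. apply Hf. }
  assert (Ha : ex_series (fun i => ap w i ^ 2)).
  { apply Hex. intro i; unfold alpha_sq. generalize (pow2_ge_0 (ap w i)) (pow2_ge_0 (am w i)); lra. }
  assert (Hb : ex_series (fun i => am w i ^ 2)).
  { apply Hex. intro i; unfold alpha_sq. generalize (pow2_ge_0 (ap w i)) (pow2_ge_0 (am w i)); lra. }
  split; [now apply (ex_series_plus _ _ Ha Hb) | now apply Series_plus].
Qed.

Lemma omega_alpha_le_sqrt_delta w i : in_Omega_hat w ->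
  0 <= ap w i <= sqrt (dl w) /\ 0 <= am w i <= sqrt (dl w).
Proof.
  intro Hw. assert (H := psum_alpha_sq_le w (S i) Hw).
  change (psum (alpha_sq w) i + (ap w i ^ 2 + am w i ^ 2) <= dl w) in H.
  assert (H0 := psum_nonneg (alpha_sq w) i (alpha_sq_nonneg w)).
  destruct Hw as ((Ha & _) & (Hb & _) & _).
  generalize (pow2_ge_0 (ap w i)) (pow2_ge_0 (am w i)). intros.
  split; split; auto.
  - rewrite <- (sqrt_pow2 (ap w i)) by auto. apply sqrt_le_1_alt. lra.
  - rewrite <- (sqrt_pow2 (am w i)) by auto. apply sqrt_le_1_alt. lra.
Qed.

Definition weierstrass2_pair (a b : R) (z : C) : C :=
  (weierstrass2 (z * RtoC a) * weierstrass2 (- z * RtoC b))%C.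

Definition weierstrass2_prod (w : omega) (z : C) : nat -> C :=
  cprod (fun i => weierstrass2_pair (ap w i) (am w i) z).

Definition gauss_exponent (w : omega) (z : C) : C :=
  (- (RtoC (g1 w) * z) - RtoC (dl w / 2) * (z * z))%C.

Lemma Efactor_weierstrass2_pair a b z :
  Efactor a b z = (Cexp (- (RtoC ((a ^ 2 + b ^ 2) / 2) * (z * z))) * weierstrass2_pair a b z)%C.
Proof.
  unfold Efactor, weierstrass2_pair, weierstrass2.
  transitivity (Cexp (z * RtoC a + - (z * RtoC b)) * ((1 - z * RtoC a) * (1 - - z * RtoC b)))%C.
  - rewrite Cexp_add. ring.
  - replace (z * RtoC a + - (z * RtoC b))%C with
      (- (RtoC ((a ^ 2 + b ^ 2) / 2) * (z * z)) +
       (z * RtoC a + RtoC (1 / 2) * (z * RtoC a * (z * RtoC a))) +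
       (- z * RtoC b + RtoC (1 / 2) * (- z * RtoC b * (- z * RtoC b))))%C
      by (destruct z; apply injective_projections; simpl; field).
    rewrite !Cexp_add. ring.
Qed.

Lemma Eprod_weierstrass2_prod w z N :
  Eprod w z N =
  (Cexp (- (RtoC (psum (alpha_sq w) N / 2) * (z * z))) * weierstrass2_prod w z N)%C.
Proof.
  unfold weierstrass2_prod; induction N as [| N IHN]; cbn [Eprod psum cprod].
  - replace (- (RtoC (0 / 2) * (z * z)))%C with (RtoC 0)
      by (apply injective_projections; simpl; field).
    rewrite Cexp_0. ring.
  - rewrite IHN, Efactor_weierstrass2_pair.
    replace (- (RtoC ((psum (alpha_sq w) N + alpha_sq w N) / 2) * (z * z)))%C with
      (- (RtoC (psum (alpha_sq w) N / 2) * (z * z)) +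
       - (RtoC ((ap w N ^ 2 + am w N ^ 2) / 2) * (z * z)))%C
      by (unfold alpha_sq; apply injective_projections; simpl; field).
    rewrite Cexp_add. ring.
Qed.

Lemma Cmod_weierstrass2_ray_le z a : Cmod (weierstrass2 (z * RtoC a)) <= exp (Cmod z ^ 2 * a ^ 2).
Proof.
  eapply Rle_trans; [apply Cmod_weierstrass2_le |].
  rewrite Cmod_RtoC_mul, Rpow_mult_distr, pow2_abs. lra.
Qed.

Lemma Cmod_weierstrass2_pair_le a b z :
  Cmod (weierstrass2_pair a b z) <= exp (Cmod z ^ 2 * (a ^ 2 + b ^ 2)).
Proof.
  unfold weierstrass2_pair. rewrite Cmod_mult, Rmult_plus_distr_l, exp_plus.
  apply Rmult_le_compat; try apply Cmod_ge_0.
  - apply Cmod_weierstrass2_ray_le.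
  - rewrite <- (Cmod_opp z). apply Cmod_weierstrass2_ray_le.
Qed.

Lemma Cmod_weierstrass2_pair_sub_le a b a' b' z m :
  0 <= a <= m -> 0 <= a' <= m -> 0 <= b <= m -> 0 <= b' <= m ->
  Cmod (weierstrass2_pair a b z - weierstrass2_pair a' b' z) <=
  weierstrass2_lipschitz z m * exp (Cmod z ^ 2 * m ^ 2) *
  ((a ^ 2 + a' ^ 2) * Rabs (a - a') + (b ^ 2 + b' ^ 2) * Rabs (b - b')).
Proof.
  intros Ha Ha' Hb Hb'. unfold weierstrass2_pair.
  set (G := weierstrass2).
  replace (G (z * RtoC a) * G (- z * RtoC b) - G (z * RtoC a') * G (- z * RtoC b'))%C
    with ((G (z * RtoC a) - G (z * RtoC a')) * G (- z * RtoC b) +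
          G (z * RtoC a') * (G (- z * RtoC b) - G (- z * RtoC b')))%C by ring.
  eapply Rle_trans; [apply Cmod_triangle |]. rewrite !Cmod_mult.
  assert (Hray : forall u c, Cmod u = Cmod z -> 0 <= c <= m ->
                   Cmod (G (u * RtoC c)%C) <= exp (Cmod z ^ 2 * m ^ 2)).
  { intros u c Hu Hc. eapply Rle_trans; [apply Cmod_weierstrass2_ray_le |].
    rewrite Hu. apply exp_le_exp, Rmult_le_compat_l; [apply pow2_ge_0 |].
    apply pow_incr; lra. }
  assert (Hlip := weierstrass2_lipschitz_ge0 z m).
  assert (Da := Cmod_weierstrass2_ray_sub_le z a a' m Ha Ha').
  assert (Db := Cmod_weierstrass2_ray_sub_le (- z) b b' m Hb Hb').
  rewrite weierstrass2_lipschitz_opp in Db.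
  rewrite Rmult_plus_distr_l. apply Rplus_le_compat.
  - rewrite (Rmult_comm _ (exp _)), Rmult_assoc, Rmult_comm.
    apply Rmult_le_compat; try apply Cmod_ge_0; auto.
    apply Hray; [apply Cmod_opp | exact Hb].
  - rewrite (Rmult_comm _ (exp _)), Rmult_assoc.
    apply Rmult_le_compat; try apply Cmod_ge_0; auto.
Qed.

Lemma Cmod_weierstrass2_prod_le w z N :
  in_Omega_hat w -> Cmod (weierstrass2_prod w z N) <= exp (Cmod z ^ 2 * dl w).
Proof.
  intro Hw.
  eapply Rle_trans; [apply (Cmod_cprod_le _ (fun i => Cmod z ^ 2 * alpha_sq w i)) |].
  - intro i. apply Cmod_weierstrass2_pair_le.
  - rewrite psum_scal. apply exp_le_exp, Rmult_le_compat_l; [apply pow2_ge_0 |].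
    now apply psum_alpha_sq_le.
Qed.

Lemma weierstrass2_prod_converges w z :
  in_Omega_hat w -> exists P, is_Clim (weierstrass2_prod w z) P.
Proof.
  intro Hw. set (m := sqrt (dl w)).
  set (K := weierstrass2_lipschitz z m * exp (Cmod z ^ 2 * m ^ 2)).
  assert (HK : 0 <= K)
    by (apply Rmult_le_pos; [apply weierstrass2_lipschitz_ge0 | apply Rlt_le, exp_pos]).
  apply (is_Clim_of_summable_increments _ (fun n => exp (Cmod z ^ 2 * dl w) * (K * m * alpha_sq w n))).
  - intro n. unfold weierstrass2_prod; simpl. fold (weierstrass2_prod w z n).
    replace (weierstrass2_prod w z n * weierstrass2_pair (ap w n) (am w n) z - weierstrass2_prod w z n)%C
      with (weierstrass2_prod w z n *
            (weierstrass2_pair (ap w n) (am w n) z - weierstrass2_pair 0 0 z))%C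
      by (unfold weierstrass2_pair; replace (z * RtoC 0)%C with (RtoC 0) by ring;
          replace (- z * RtoC 0)%C with (RtoC 0) by ring; rewrite weierstrass2_0; ring).
    rewrite Cmod_mult.
    apply Rmult_le_compat; try apply Cmod_ge_0; [now apply Cmod_weierstrass2_prod_le |].
    destruct (omega_alpha_le_sqrt_delta w n Hw) as [Ha Hb]; fold m in Ha, Hb.
    eapply Rle_trans; [apply Cmod_weierstrass2_pair_sub_le; eauto; lra |]. fold K.
    rewrite Rmult_assoc. apply Rmult_le_compat_l; auto.
    rewrite !Rminus_0_r, !Rabs_right by lra. unfold alpha_sq. nra.
  - apply (@ex_series_scal R_AbsRing R_NormedModule).
    apply (@ex_series_scal R_AbsRing R_NormedModule).
    now apply omega_alpha_sq_series.
Qed.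

Lemma E_factorization w z P : in_Omega_hat w -> is_Clim (weierstrass2_prod w z) P ->
  E w z = (Cexp (gauss_exponent w z) * P)%C.
Proof.
  intros Hw HP.
  destruct (omega_alpha_sq_series w Hw) as [Hex HS].
  set (S := Series (alpha_sq w)) in HS.
  assert (HE : is_Clim (Eprod w z) (Cexp (RtoC (- (S / 2)) * (z * z)) * P)%C).
  { apply is_Clim_ext with
      (u := fun N => (Cexp (RtoC (- (psum (alpha_sq w) N / 2)) * (z * z)) * weierstrass2_prod w z N)%C).
    - intro N. rewrite Eprod_weierstrass2_prod. do 3 f_equal.
      apply injective_projections; simpl; ring.
    - apply is_Clim_mult; auto. apply is_Clim_Cexp, is_Clim_RtoC_mult.
      replace (- (S / 2)) with (- / 2 * S) by field.
      eapply is_lim_seq_ext; [| exact (is_lim_seq_scal_l _ (- / 2) S (is_lim_seq_psum _ Hex))].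
      intro; simpl; field. }
  unfold E. rewrite (Clim_seq_correct _ _ HE), Cmult_assoc, <- Cexp_add.
  unfold gauss_exponent, g2.
  replace (dl w - Series (fun i => ap w i ^ 2) - Series (fun i => am w i ^ 2)) with (dl w - S)
    by (rewrite HS; ring).
  do 2 f_equal. apply injective_projections; simpl; field.
Qed.

(** * The Lipschitz estimate *)

Definition alpha_cube_dist (w w' : omega) (i : nat) : R :=
  Rabs (ap w i - ap w' i) ^ 3 + Rabs (am w i - am w' i) ^ 3.

Lemma cbrt_ge0 x : 0 <= cbrt x.
Proof. unfold cbrt. destruct (Rle_dec x 0); [lra | apply Rlt_le, exp_pos]. Qed.

Lemma le_cbrt x S : 0 <= x -> x ^ 3 <= S -> x <= cbrt S.
Proof.
  intros Hx HS. destruct (Req_dec x 0) as [-> | Hx0]; [apply cbrt_ge0 |].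
  assert (Hx' : 0 < x) by lra. assert (H3 : 0 < x ^ 3) by now apply pow_lt.
  unfold cbrt. destruct (Rle_dec S 0); [lra |].
  replace x with (Rpower (x ^ 3) (1 / 3)) at 1.
  - apply Rle_Rpower_l; lra.
  - rewrite <- (Rpower_pow 3 x Hx'), Rpower_mult.
    replace (INR 3 * (1 / 3)) with 1 by (simpl; field). now apply Rpower_1.
Qed.

Lemma Rabs_sub_cube_le a a' m : 0 <= a <= m -> 0 <= a' <= m ->
  Rabs (a - a') ^ 3 <= m * (a ^ 2 + a' ^ 2).
Proof.
  intros Ha Ha'.
  assert (Hm : Rabs (a - a') <= m) by (apply Rabs_le; lra).
  assert (Hsq : Rabs (a - a') ^ 2 <= a ^ 2 + a' ^ 2)
    by (rewrite <- Rsqr_pow2, <- Rsqr_abs, Rsqr_pow2; nra).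
  replace (Rabs (a - a') ^ 3) with (Rabs (a - a') * Rabs (a - a') ^ 2) by ring.
  apply Rmult_le_compat; auto using Rabs_pos, pow2_ge_0.
Qed.

Lemma ex_series_alpha_cube_dist w w' : in_Omega_hat w -> in_Omega_hat w' ->
  ex_series (alpha_cube_dist w w').
Proof.
  intros Hw Hw'. set (mu := sqrt (dl w) + sqrt (dl w')).
  apply (@ex_series_le R_AbsRing R_CompleteNormedModule _
           (fun i => mu * (alpha_sq w i + alpha_sq w' i))).
  - intro i. change (Rabs (alpha_cube_dist w w' i) <= mu * (alpha_sq w i + alpha_sq w' i)).
    destruct (omega_alpha_le_sqrt_delta w i Hw) as [Ha Hb].
    destruct (omega_alpha_le_sqrt_delta w' i Hw') as [Ha' Hb'].
    assert (0 <= sqrt (dl w)) by apply sqrt_pos. assert (0 <= sqrt (dl w')) by apply sqrt_pos.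
    assert (H1 := Rabs_sub_cube_le (ap w i) (ap w' i) mu ltac:(unfold mu; lra) ltac:(unfold mu; lra)).
    assert (H2 := Rabs_sub_cube_le (am w i) (am w' i) mu ltac:(unfold mu; lra) ltac:(unfold mu; lra)).
    generalize (pow_le _ 3 (Rabs_pos (ap w i - ap w' i))) (pow_le _ 3 (Rabs_pos (am w i - am w' i))).
    unfold alpha_cube_dist, alpha_sq. intros. rewrite Rabs_right by lra. lra.
  - apply (@ex_series_scal R_AbsRing R_NormedModule).
    apply (@ex_series_plus R_AbsRing R_NormedModule); now apply omega_alpha_sq_series.
Qed.

Lemma Rabs_alpha_sub_le_cbrt w w' i : in_Omega_hat w -> in_Omega_hat w' ->
  Rabs (ap w i - ap w' i) <= cbrt (Series (alpha_cube_dist w w')) /\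
  Rabs (am w i - am w' i) <= cbrt (Series (alpha_cube_dist w w')).
Proof.
  intros Hw Hw'.
  assert (Hpos : forall j, 0 <= Rabs (ap w j - ap w' j) ^ 3 /\ 0 <= Rabs (am w j - am w' j) ^ 3)
    by (intro j; split; apply pow_le, Rabs_pos).
  assert (Hterm := term_le_Series (alpha_cube_dist w w') i
                     ltac:(intro j; unfold alpha_cube_dist; generalize (Hpos j); lra)
                     (ex_series_alpha_cube_dist w w' Hw Hw')).
  unfold alpha_cube_dist at 1 in Hterm. generalize (Hpos i). intros.
  split; apply le_cbrt; auto using Rabs_pos; lra.
Qed.

Lemma cubic_exp_growth_le r X T d : 0 <= r -> 0 <= X -> 0 <= T -> 0 <= d -> r ^ 2 * d <= X ^ 2 ->
  exp (r ^ 2 * d) * (r ^ 3 * exp (X + X ^ 2 / 2) * exp (X ^ 2) * T * d)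
  <= r * T * exp (4 * (X + 1) ^ 3).
Proof.
  intros Hr HX HT Hd HrX.
  assert (E1 : exp (r ^ 2 * d) <= exp (X ^ 2)) by now apply exp_le_exp.
  assert (E2 : r ^ 3 * d <= r * exp (X ^ 2)).
  { replace (r ^ 3 * d) with (r * (r ^ 2 * d)) by ring. apply Rmult_le_compat_l; auto.
    generalize (exp_ineq1_le (X ^ 2)). lra. }
  assert (E3 : X + X ^ 2 / 2 + X ^ 2 + X ^ 2 + X ^ 2 <= 4 * (X + 1) ^ 3)
    by (generalize (pow_le X 3 HX) (pow2_ge_0 X); intros; nra).
  replace (exp (r ^ 2 * d) * (r ^ 3 * exp (X + X ^ 2 / 2) * exp (X ^ 2) * T * d))
    with ((exp (r ^ 2 * d) * (r ^ 3 * d)) * (exp (X + X ^ 2 / 2) * exp (X ^ 2) * T)) by ring.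
  eapply Rle_trans.
  { apply Rmult_le_compat_r.
    { apply Rmult_le_pos; [apply Rmult_le_pos; apply Rlt_le, exp_pos | exact HT]. }
    apply Rmult_le_compat; [apply Rlt_le, exp_pos | apply Rmult_le_pos; [apply pow_le |] |
                            exact E1 | exact E2]; auto. }
  replace (exp (X ^ 2) * (r * exp (X ^ 2)) * (exp (X + X ^ 2 / 2) * exp (X ^ 2) * T))
    with (r * T * exp (X + X ^ 2 / 2 + X ^ 2 + X ^ 2 + X ^ 2)) by (rewrite !exp_plus; ring).
  apply Rmult_le_compat_l; [nra |]. now apply exp_le_exp.
Qed.

Lemma Cmod_weierstrass2_pair_sub_le_cube_dist w w' z i : in_Omega_hat w -> in_Omega_hat w' ->
  Cmod (weierstrass2_pair (ap w i) (am w i) z - weierstrass2_pair (ap w' i) (am w' i) z) <=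
  weierstrass2_lipschitz z (sqrt (dl w) + sqrt (dl w')) *
  exp (Cmod z ^ 2 * (sqrt (dl w) + sqrt (dl w')) ^ 2) *
  cbrt (Series (alpha_cube_dist w w')) * (alpha_sq w i + alpha_sq w' i).
Proof.
  intros Hw Hw'.
  set (mu := sqrt (dl w) + sqrt (dl w')). set (T := cbrt (Series (alpha_cube_dist w w'))).
  set (K := weierstrass2_lipschitz z mu * exp (Cmod z ^ 2 * mu ^ 2)).
  assert (HK : 0 <= K)
    by (apply Rmult_le_pos; [apply weierstrass2_lipschitz_ge0 | apply Rlt_le, exp_pos]).
  assert (Hs := sqrt_pos (dl w)). assert (Hs' := sqrt_pos (dl w')).
  destruct (omega_alpha_le_sqrt_delta w i Hw) as [Ha Hb].
  destruct (omega_alpha_le_sqrt_delta w' i Hw') as [Ha' Hb'].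
  destruct (Rabs_alpha_sub_le_cbrt w w' i Hw Hw') as [Da Db]. fold T in Da, Db.
  eapply Rle_trans; [apply (Cmod_weierstrass2_pair_sub_le _ _ _ _ z mu); unfold mu; lra |].
  fold K. unfold alpha_sq.
  replace (K * T * (ap w i ^ 2 + am w i ^ 2 + (ap w' i ^ 2 + am w' i ^ 2)))
    with (K * ((ap w i ^ 2 + ap w' i ^ 2) * T + (am w i ^ 2 + am w' i ^ 2) * T)) by ring.
  apply Rmult_le_compat_l; auto.
  apply Rplus_le_compat; apply Rmult_le_compat_l; auto;
    apply Rplus_le_le_0_compat; apply pow2_ge_0.
Qed.

Lemma Cmod_weierstrass2_prod_sub_le w w' z N : in_Omega_hat w -> in_Omega_hat w' ->
  Cmod (weierstrass2_prod w z N - weierstrass2_prod w' z N) <=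
  Cmod z * cbrt (Series (alpha_cube_dist w w')) *
  exp (4 * (Cmod z * (sqrt (dl w) + sqrt (dl w')) + 1) ^ 3).
Proof.
  intros Hw Hw'.
  set (mu := sqrt (dl w) + sqrt (dl w')). set (r := Cmod z).
  set (T := cbrt (Series (alpha_cube_dist w w'))).
  set (K := weierstrass2_lipschitz z mu * exp (r ^ 2 * mu ^ 2)).
  assert (Hr : 0 <= r) by apply Cmod_ge_0. assert (HT : 0 <= T) by apply cbrt_ge0.
  assert (HK : 0 <= K)
    by (apply Rmult_le_pos; [apply weierstrass2_lipschitz_ge0 | apply Rlt_le, exp_pos]).
  assert (Hd := proj1 (proj2 (proj2 Hw))). assert (Hd' := proj1 (proj2 (proj2 Hw'))).
  eapply Rle_trans.
  { apply (Cmod_cprod_sub_le _ _ (fun i => r ^ 2 * alpha_sq w i) (fun i => r ^ 2 * alpha_sq w' i));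
      intro; try apply Cmod_weierstrass2_pair_le;
      apply Rmult_le_pos; auto using pow2_ge_0, alpha_sq_nonneg. }
  rewrite !psum_scal.
  apply Rle_trans with (exp (r ^ 2 * (dl w + dl w')) * (K * T * (dl w + dl w'))).
  - apply Rmult_le_compat; [apply Rlt_le, exp_pos | apply psum_nonneg; intro; apply Cmod_ge_0 | |].
    + apply exp_le_exp. rewrite Rmult_plus_distr_l.
      apply Rplus_le_compat; apply Rmult_le_compat_l; auto using pow2_ge_0, psum_alpha_sq_le.
    + eapply Rle_trans; [apply psum_le; intro i; now apply Cmod_weierstrass2_pair_sub_le_cube_dist |].
      rewrite psum_scal, psum_plus. apply Rmult_le_compat_l; [nra |].
      apply Rplus_le_compat; now apply psum_alpha_sq_le.
  - assert (Hmu : dl w + dl w' <= mu ^ 2).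
    { unfold mu. rewrite <- (sqrt_sqrt (dl w)) at 1 by auto.
      rewrite <- (sqrt_sqrt (dl w')) at 1 by auto. generalize (sqrt_pos (dl w)) (sqrt_pos (dl w')). nra. }
    assert (HX : 0 <= r * mu) by (apply Rmult_le_pos; [| unfold mu; apply Rplus_le_le_0_compat]; auto using sqrt_pos).
    unfold K, weierstrass2_lipschitz. fold r.
    replace (r * mu + r ^ 2 * mu ^ 2 / 2) with (r * mu + (r * mu) ^ 2 / 2) by field.
    replace (r ^ 2 * mu ^ 2) with ((r * mu) ^ 2) by ring.
    apply cubic_exp_growth_le; try lra.
    rewrite Rpow_mult_distr. apply Rmult_le_compat_l; [apply pow2_ge_0 | exact Hmu].
Qed.

Lemma Cmod_Cexp_mul_sub_le (A A' P P' : C) :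
  Cmod (Cexp A * P - Cexp A' * P') <=
  exp (Re A) * (exp (Cmod (A' - A)) - 1) * Cmod P + exp (Re A') * Cmod (P - P').
Proof.
  assert (HA' : Cexp A' = (Cexp A * Cexp (A' - A))%C) by (rewrite <- Cexp_add; f_equal; ring).
  replace (Cexp A * P - Cexp A' * P')%C with
    (- (Cexp A * (Cexp (A' - A) - 1) * P) + Cexp A' * (P - P'))%C by (rewrite HA'; ring).
  eapply Rle_trans; [apply Cmod_triangle |].
  rewrite Cmod_opp, !Cmod_mult, !Cmod_Cexp.
  apply Rplus_le_compat_r, Rmult_le_compat_r; [apply Cmod_ge_0 |].
  apply Rmult_le_compat_l; [apply Rlt_le, exp_pos | apply Cmod_Cexp_sub_1_le].
Qed.

Lemma Re_gauss_exponent_le w z : 0 <= dl w ->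
  Re (gauss_exponent w z) <= Rabs (g1 w) * Cmod z + dl w / 2 * Cmod z ^ 2.
Proof.
  intro Hd. eapply Rle_trans; [apply Re_le_Cmod |].
  eapply Rle_trans; [apply Cmod_triangle |].
  rewrite !Cmod_opp, !Cmod_mult, !Cmod_R, (Rabs_right (dl w / 2)) by lra. lra.
Qed.

Lemma Cmod_gauss_exponent_sub_le w w' z :
  Cmod (gauss_exponent w' z - gauss_exponent w z) <=
  Rabs (g1 w - g1 w') * Cmod z + Rabs (dl w - dl w') / 2 * Cmod z ^ 2.
Proof.
  replace (gauss_exponent w' z - gauss_exponent w z)%C with
    (RtoC (g1 w - g1 w') * z + RtoC ((dl w - dl w') / 2) * (z * z))%C
    by (unfold gauss_exponent; apply injective_projections; simpl; field).
  eapply Rle_trans; [apply Cmod_triangle |].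
  rewrite !Cmod_mult, !Cmod_R. unfold Rdiv. rewrite Rabs_mult, (Rabs_right (/ 2)) by lra. lra.
Qed.

Lemma Cmod_Cexp_gauss_mul_prod_le w z N : in_Omega_hat w ->
  exp (Re (gauss_exponent w z)) * Cmod (weierstrass2_prod w z N)
  <= exp (Rabs (g1 w) * Cmod z + 3 / 2 * dl w * Cmod z ^ 2).
Proof.
  intro Hw. assert (Hd := proj1 (proj2 (proj2 Hw))).
  eapply Rle_trans.
  { apply Rmult_le_compat; [apply Rlt_le, exp_pos | apply Cmod_ge_0 | |].
    - apply exp_le_exp, (Re_gauss_exponent_le w z Hd).
    - now apply Cmod_weierstrass2_prod_le. }
  rewrite <- exp_plus. apply exp_le_exp. lra.
Qed.

Lemma gauss_exponent_sub_term_le w w' z N : in_Omega_hat w ->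
  exp (Re (gauss_exponent w z)) * (exp (Cmod (gauss_exponent w' z - gauss_exponent w z)) - 1) *
  Cmod (weierstrass2_prod w z N)
  <= exp (Rabs (g1 w) * Cmod z + 5 * dl w * Cmod z ^ 2) *
     (exp (Rabs (g1 w - g1 w') * Cmod z + Rabs (dl w - dl w') / 2 * Cmod z ^ 2) - 1).
Proof.
  intro Hw. set (A := gauss_exponent w z). set (A' := gauss_exponent w' z).
  assert (Hd := proj1 (proj2 (proj2 Hw))). assert (Hr := pow2_ge_0 (Cmod z)).
  assert (HD : exp (Cmod (A' - A)) - 1 <=
               exp (Rabs (g1 w - g1 w') * Cmod z + Rabs (dl w - dl w') / 2 * Cmod z ^ 2) - 1)
    by (apply Rplus_le_compat_r, exp_le_exp, Cmod_gauss_exponent_sub_le).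
  assert (HD0 : 0 <= exp (Cmod (A' - A)) - 1)
    by (generalize (exp_ineq1_le (Cmod (A' - A))) (Cmod_ge_0 (A' - A)); lra).
  rewrite Rmult_assoc, (Rmult_comm (_ - 1)), <- Rmult_assoc.
  apply Rmult_le_compat; auto.
  - apply Rmult_le_pos; [apply Rlt_le, exp_pos | apply Cmod_ge_0].
  - eapply Rle_trans; [now apply Cmod_Cexp_gauss_mul_prod_le |].
    apply exp_le_exp. nra.
Qed.

Lemma weierstrass2_prod_sub_term_le w w' z N : in_Omega_hat w -> in_Omega_hat w' ->
  exp (Re (gauss_exponent w' z)) * Cmod (weierstrass2_prod w z N - weierstrass2_prod w' z N)
  <= Cmod z * cbrt (Series (alpha_cube_dist w w')) *
     exp (Rabs (g1 w') * Cmod z + dl w' / 2 * Cmod z ^ 2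
          + 4 * (Cmod z * (sqrt (dl w) + sqrt (dl w')) + 1) ^ 3).
Proof.
  intros Hw Hw'. eapply Rle_trans.
  { apply Rmult_le_compat; [apply Rlt_le, exp_pos | apply Cmod_ge_0 | |].
    - apply exp_le_exp, Re_gauss_exponent_le, Hw'.
    - now apply Cmod_weierstrass2_prod_sub_le. }
  rewrite (exp_plus (Rabs (g1 w') * Cmod z + _)). right. ring.
Qed.

Theorem proposition5p1 :
  exists L : R,
    forall (w w' : omega), in_Omega_hat w -> in_Omega_hat w' ->
    forall z : C,
      Cmod (Cminus (E w z) (E w' z)) <=
        exp (Rabs (g1 w) * Cmod z + 5 * dl w * (Cmod z) ^ 2) *
          (exp (Rabs (g1 w - g1 w') * Cmod z + Rabs (dl w - dl w') / 2 * (Cmod z) ^ 2) - 1)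
      + Cmod z *
          cbrt (Series (fun i => Rabs (ap w i - ap w' i) ^ 3 + Rabs (am w i - am w' i) ^ 3)) *
          exp (Rabs (g1 w') * Cmod z + dl w' / 2 * (Cmod z) ^ 2
               + L * (Cmod z * (sqrt (dl w) + sqrt (dl w')) + 1) ^ 3).
Proof.
  exists 4. intros w w' Hw Hw' z.
  change (fun i => _ + _) with (alpha_cube_dist w w').
  destruct (weierstrass2_prod_converges w z Hw) as [P HP].
  destruct (weierstrass2_prod_converges w' z Hw') as [P' HP'].
  rewrite (E_factorization w z P Hw HP), (E_factorization w' z P' Hw' HP').
  apply (is_Clim_Cmod_le (fun N => Cexp (gauss_exponent w z) * weierstrass2_prod w z N
                                   - Cexp (gauss_exponent w' z) * weierstrass2_prod w' z N)%C).
  { apply is_Clim_minus; apply is_Clim_mult; auto using is_Clim_const. }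
  intro N. eapply Rle_trans; [apply Cmod_Cexp_mul_sub_le |].
  apply Rplus_le_compat.
  - now apply gauss_exponent_sub_term_le.
  - now apply weierstrass2_prod_sub_term_le.
Qed.
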